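(* Let $f$ satisfy the $L$-descent condition for some $L>0$, and let $\{x^k\}$ be generated by Algorithm IRG with $\theta<\mu$, $\rho_k=\varepsilon_k$ for all $k$, and stepsizes either diminishing ($t_k>0$, $t_k\downarrow0$, $\sum_k t_k=\infty$) or of constant type (there exist $\delta\in(0,2)$ and $\delta'>0$ with $\delta'\le\frac{2-\delta}{L}$ and $t_k\in[\delta',\frac{2-\delta}{L}]$ for all $k$). Assume that $\bar x$ is an accumulation point of $\{x^k\}$ and that $f$ satisfies the KL property at $\bar x$. Then $\bar x$ is a stationary point of $f$ and $x^k\to\bar x$ as $k\to\infty$.
   Context: Algorithm IRG (general inexact reduced gradient framework). Let $f:\mathbb R^n\to\mathbb R$ be continuously differentiable. Parameters: initial point $x^1\in\mathbb R^n$, initial radii $\varepsilon_1>0$, $r_1>0$, reduction factors $\mu,\theta\in(0,1)$, and a sequence $\{\rho_k\}$ of positive numbers. For $k=1,2,\dots$: (1) choose $g^k\in\mathbb R^n$ with $\|g^k-\nabla f(x^k)\|\le\min\{\varepsilon_k,\rho_k\}$; (2) if $\|g^k\|\le r_k+\varepsilon_k$, set $r_{k+1}=\mu r_k$, $\varepsilon_{k+1}=\theta\varepsilon_k$, $d^k=0$; otherwise set $r_{k+1}=r_k$, $\varepsilon_{k+1}=\varepsilon_k$ and $d^k=-\frac{\|g^k\|-\varepsilon_k}{\|g^k\|}g^k$; (3) choose a stepsize $t_k>0$ by some rule; (4) set $x^{k+1}=x^k+t_kd^k$. $f$ satisfies the $L$-descent condition if $f(y)\le f(x)+\langle\nabla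 f(x),y-x\rangle+\frac L2\|y-x\|^2$ for all $x,y\in\mathbb R^n$. KL property: $f$ satisfies the KL property at $\bar x$ if there exist $\eta>0$, a neighborhood $U$ of $\bar x$, and a nondecreasing function $\psi:(0,\eta)\to(0,\infty)$ such that $1/\psi$ is integrable over $(0,\eta)$ and $\|\nabla f(x)\|\ge\psi(f(x)-f(\bar x))$ for all $x\in U$ with $f(\bar x)<f(x)<f(\bar x)+\eta$. *)

From HB Require Import structures.
From mathcomp Require Import all_boot all_order all_algebra.
From mathcomp Require Import all_classical all_reals all_analysis.
Set Implicit Arguments. Unset Strict Implicit. Unset Printing Implicit Defensive.
Import Order.TTheory GRing.Theory Num.Theory.
Import numFieldNormedType.Exports.
Local Open Scope classical_set_scope.
Local Open Scope ring_scope.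

Section Defs.
Variables (R : realType) (n : nat).

Definition dotv (u v : 'rV[R]_n) : R := \sum_(i < n) u ord0 i * v ord0 i.
Definition enorm (u : 'rV[R]_n) : R := Num.sqrt (dotv u u).

Definition C1_with_gradient (f : 'rV[R]_n -> R) (gradf : 'rV[R]_n -> 'rV[R]_n) :=
  (forall x, differentiable f x) /\
  (forall x h, 'd f x h = dotv (gradf x) h) /\
  continuous gradf.

Definition L_descent (f : 'rV[R]_n -> R) (gradf : 'rV[R]_n -> 'rV[R]_n) (L : R) :=
  forall x y, f y <= f x + dotv (gradf x) (y - x) + L / 2 * (enorm (y - x)) ^+ 2.

Definition KL_at (f : 'rV[R]_n -> R) (gradf : 'rV[R]_n -> 'rV[R]_n) (xbar : 'rV[R]_n) :=
  exists (eta : R) (U : set 'rV[R]_n) (psi : R -> R),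
    [/\ 0 < eta, nbhs xbar U,
        (forall s, 0 < s < eta -> 0 < psi s) /\
        (forall s t, 0 < s -> s <= t -> t < eta -> psi s <= psi t),
        integrable (@lebesgue_measure R) `]0, eta[ (fun s => ((psi s)^-1)%:E) &
        (forall x, U x -> f xbar < f x < f xbar + eta ->
           enorm (gradf x) >= psi (f x - f xbar))].

(* A run of Algorithm IRG (iterations indexed from 0 instead of 1):
   iterates x, approximate gradients g, directions d, radii r, eps,
   stepsizes t, parameters mu, theta and sequence rho. The stepsize rule
   itself is left free here (constrained separately). *)
Definition IRG_run (f : 'rV[R]_n -> R) (gradf : 'rV[R]_n -> 'rV[R]_n)
  (mu theta : R) (rho : nat -> R)
  (x g d : nat -> 'rV[R]_n) (r eps t : nat -> R) :=
  [/\ 0 < eps 0, 0 < r 0, 0 < mu < 1, 0 < theta < 1 /\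
      (forall k, 0 < rho k) &
      forall k,
      [/\ enorm (g k - gradf (x k)) <= Num.min (eps k) (rho k),
          (if enorm (g k) <= r k + eps k then
             [/\ r k.+1 = mu * r k, eps k.+1 = theta * eps k & d k = 0]
           else
             [/\ r k.+1 = r k, eps k.+1 = eps k &
                 d k = - ((enorm (g k) - eps k) / enorm (g k)) *: g k]),
          0 < t k &
          x k.+1 = x k + t k *: d k]].

Definition diminishing_steps (t : nat -> R) :=
  [/\ (forall k, 0 < t k), (forall k, t k.+1 <= t k), t @ \oo --> 0 &
      (fun N => \sum_(k < N) t k) @ \oo --> +oo].

Definition constant_type_steps (L : R) (t : nat -> R) :=
  exists delta delta' : R,
    [/\ 0 < delta < 2, 0 < delta', delta' <= (2 - delta) / L &
        forall k, delta' <= t k <= (2 - delta) / L].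

End Defs.

(* Outside null iterations the direction [d k] is a descent direction with
   [|d k| > r k], so the L-descent condition yields the sufficient decrease
   [f (x k.+1) <= f (x k) - alpha t_k |d k|^2] for large [k], and [f (x k)] decreases
   to [f xbar].  As the stepsizes are not summable, null iterations occur infinitely
   often; there the gradient is bounded by a multiple of the radius [r k], which tends
   to [0], hence the limit is stationary.  Convergence of the whole sequence is the
   finite-length argument of Kurdyka-Lojasiewicz theory: with [G] a primitive of
   [1 / psi], each step satisfies
   [|x k.+1 - x k| <= C / alpha * (G (f (x k) - f xbar) - G (f (x k.+1) - f xbar))]
   while [x k] is near [xbar], and these bounds telescope.  If instead [f (x k)]
   reaches [f xbar], the iterates stall at a point, which must be [xbar]. *)

From HB Require Import structures.
From mathcomp Require Import all_boot all_order all_algebra.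
From mathcomp Require Import all_classical all_reals all_analysis.
From mathcomp Require Import ring lra.
Import Order.TTheory GRing.Theory Num.Theory.
Import numFieldNormedType.Exports.
Local Open Scope classical_set_scope.
Local Open Scope ring_scope.

Set Implicit Arguments. Unset Strict Implicit. Unset Printing Implicit Defensive.

Section Euclidean.
Variables (R : realType) (n : nat).
Implicit Types (u v w : 'rV[R]_n) (a : R).

Lemma dotvC u v : dotv u v = dotv v u.
Proof. by apply: eq_bigr => i _; rewrite mulrC. Qed.

Lemma dotvDl u v w : dotv (u + v) w = dotv u w + dotv v w.
Proof. by rewrite /dotv -big_split; apply: eq_bigr => i _; rewrite mxE mulrDl. Qed.

Lemma dotvZl a u v : dotv (a *: u) v = a * dotv u v.
Proof. by rewrite /dotv mulr_sumr; apply: eq_bigr => i _; rewrite mxE mulrA. Qed.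

Lemma dotvBl u v w : dotv (u - v) w = dotv u w - dotv v w.
Proof. by rewrite dotvDl -scaleN1r dotvZl mulN1r. Qed.

Lemma dotvDr u v w : dotv w (u + v) = dotv w u + dotv w v.
Proof. by rewrite dotvC dotvDl !(dotvC w). Qed.

Lemma dotvZr a u v : dotv v (a *: u) = a * dotv v u.
Proof. by rewrite dotvC dotvZl dotvC. Qed.

Lemma dotvBr u v w : dotv w (u - v) = dotv w u - dotv w v.
Proof. by rewrite dotvC dotvBl !(dotvC w). Qed.

Lemma dotv0r v : dotv v 0 = 0.
Proof. by rewrite /dotv big1 // => i _; rewrite mxE mulr0. Qed.

Lemma dotvv_ge0 u : 0 <= dotv u u.
Proof. by apply: sumr_ge0 => i _; rewrite -expr2 sqr_ge0. Qed.

Lemma dotvv_eq0 u : dotv u u = 0 -> u = 0.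
Proof.
move=> /eqP; rewrite psumr_eq0; last by move=> i _; rewrite -expr2 sqr_ge0.
move=> /allP u0; apply/rowP => i; rewrite mxE.
by have /u0 := mem_index_enum i; rewrite /= mulf_eq0 orbb => /eqP.
Qed.

Lemma enorm_ge0 u : 0 <= enorm u.
Proof. exact: sqrtr_ge0. Qed.

Lemma enorm_sqr u : enorm u ^+ 2 = dotv u u.
Proof. by rewrite sqr_sqrtr // dotvv_ge0. Qed.

Lemma enorm_eq0 u : enorm u = 0 -> u = 0.
Proof. by move=> u0; apply: dotvv_eq0; rewrite -enorm_sqr u0 expr0n. Qed.

Lemma enorm0 : enorm (0 : 'rV[R]_n) = 0.
Proof. by rewrite /enorm dotv0r sqrtr0. Qed.

Lemma enormZ a u : enorm (a *: u) = `|a| * enorm u.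
Proof. by rewrite /enorm dotvZl dotvZr mulrA -expr2 sqrtrM ?sqr_ge0 // sqrtr_sqr. Qed.

Lemma enormN u : enorm (- u) = enorm u.
Proof. by rewrite -scaleN1r enormZ normrN normr1 mul1r. Qed.

Lemma enorm_distC u v : enorm (u - v) = enorm (v - u).
Proof. by rewrite -enormN opprB. Qed.

Lemma dotv_le u v : dotv u v <= enorm u * enorm v.
Proof.
have [/dotvv_eq0 ->|v0] := eqVneq (dotv v v) 0.
  by rewrite dotv0r mulr_ge0 // enorm_ge0.
set a := dotv v v; set b := dotv u v.
have a_gt0 : 0 < a by rewrite lt_neqAle eq_sym v0 dotvv_ge0.
(* expand [0 <= |a u - b v|^2] *)
have := dotvv_ge0 (a *: u - b *: v).
rewrite !(dotvBl, dotvBr, dotvZl, dotvZr) -/a -/b (dotvC v u) -/b => uv_ge0.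
have b2_le : b ^+ 2 <= dotv u u * a.
  have : 0 <= a * (a * dotv u u - b ^+ 2) by move: uv_ge0; rewrite expr2; nra.
  by rewrite pmulr_rge0 // subr_ge0 mulrC.
apply: le_trans (ler_norm b) _.
rewrite -(ger0_norm (mulr_ge0 (enorm_ge0 u) (enorm_ge0 v))).
rewrite -ler_sqr ?nnegrE ?normr_ge0 //.
by rewrite !real_normK ?num_real // exprMn !enorm_sqr.
Qed.

Lemma enormD u v : enorm (u + v) <= enorm u + enorm v.
Proof.
rewrite -ler_sqr ?nnegrE ?addr_ge0 ?enorm_ge0 //.
rewrite enorm_sqr !(dotvDl, dotvDr) (dotvC v u) sqrrD !enorm_sqr.
have := dotv_le u v; lra.
Qed.

Lemma enorm_distD u v w : enorm (u - w) <= enorm (u - v) + enorm (v - w).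
Proof. by rewrite (_ : u - w = (u - v) + (v - w)) ?enormD // addrA subrK. Qed.

Lemma normr_le_enorm u : `|u| <= enorm u.
Proof.
rewrite [`|u|]mx_normrE; apply: bigmax_le => [|[i j] _ /=]; first exact: enorm_ge0.
rewrite (ord1 i) -ler_sqr ?nnegrE ?enorm_ge0 ?normr_ge0 // real_normK ?num_real //.
rewrite enorm_sqr /dotv (bigD1 j) //= -expr2 lerDl.
by apply: sumr_ge0 => k _; rewrite -expr2 sqr_ge0.
Qed.

Lemma enorm_le_normr u : enorm u <= n.+1%:R * `|u|.
Proof.
rewrite -ler_sqr ?nnegrE ?enorm_ge0 ?mulr_ge0 ?normr_ge0 // enorm_sqr.
have le_n : dotv u u <= n%:R * `|u| ^+ 2.
  rewrite -[n in n%:R]card_ord -sumr_const mulr_suml; apply: ler_sum => i _.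
  rewrite mul1r -expr2 -real_normK ?num_real // ler_sqr ?nnegrE ?normr_ge0 //.
  by rewrite [`|u|]mx_normrE (le_trans _ (le_bigmax _ _ (ord0, i))).
apply: le_trans le_n _; rewrite exprMn ler_wpM2r ?sqr_ge0 //.
by rewrite -natrX ler_nat expnS -[X in (X <= _)%N]muln1 leq_mul // expn_gt0.
Qed.

Lemma nbhs_enorm_ball v e : 0 < e -> nbhs v [set w | enorm (w - v) < e].
Proof.
move=> e_gt0; apply/nbhs_ballP; exists (e / n.+1%:R) => [|w]; first by rewrite /= divr_gt0.
rewrite -ball_normE /= ltr_pdivlMr // mulrC enorm_distC => vw_lt.
exact: le_lt_trans (enorm_le_normr _) vw_lt.
Qed.

Lemma nbhs_enormP v (U : set 'rV[R]_n) : nbhs v U ->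
  exists2 e, 0 < e & forall w, enorm (w - v) < e -> U w.
Proof.
move=> /nbhs_ballP [e e_gt0 vU]; exists e => // w wv; apply: vU.
by rewrite -ball_normE /= (le_lt_trans (normr_le_enorm _)) // enorm_distC.
Qed.

Lemma cluster_enorm (x : nat -> 'rV[R]_n) v : cluster (x @ \oo) v ->
  forall e K, 0 < e -> exists2 k, (K <= k)%N & enorm (x k - v) < e.
Proof.
move=> xv e K e_gt0.
have [|_ [[k Kk <-] xkv]] := xv [set x k | k in [set k | (K <= k)%N]]
  [set w | enorm (w - v) < e] _ (nbhs_enorm_ball v e_gt0).
  by exists K => // k /= Kk; exists k.
by exists k.
Qed.

Lemma cvg_enorm (x : nat -> 'rV[R]_n) v :
  (forall e, 0 < e -> exists K, forall k, (K <= k)%N -> enorm (x k - v) < e) ->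
  x @ \oo --> v.
Proof.
move=> xv; apply/cvgrPdist_lt => e /xv [K xKv]; exists K => // k /= Kk.
by rewrite (le_lt_trans (normr_le_enorm _)) // enorm_distC xKv.
Qed.

Lemma continuous_enorm (T : pseudoMetricType R) (h : 'rV[R]_n -> T) v e :
  {for v, continuous h} -> 0 < e ->
  exists2 del, 0 < del & forall w, enorm (w - v) < del -> ball (h v) e (h w).
Proof. by move=> hv /(nbhsx_ballx (h v)) /hv /nbhs_enormP. Qed.

End Euclidean.

Section Desingularizer.
Variables (R : realType) (eta : R) (psi : R -> R).
Hypothesis eta_gt0 : 0 < eta.
Hypothesis psi_gt0 : forall s, 0 < s < eta -> 0 < psi s.
Hypothesis psi_le : forall s t, 0 < s -> s <= t -> t < eta -> psi s <= psi t.
Hypothesis psi_inv_integrable :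
  integrable (@lebesgue_measure R) `]0, eta[ (fun s => ((psi s)^-1)%:E).

Let Phi a := \int[@lebesgue_measure R]_(s in `]0, a[) (psi s)^-1.

Lemma Phi_ge0 a : 0 < a -> a < eta -> 0 <= Phi a.
Proof.
move=> a_gt0 a_lt; apply: Rintegral_ge0 => s /=; rewrite in_itv /= => /andP[s0 sa].
by rewrite invr_ge0 ltW // psi_gt0 //; lra.
Qed.

Lemma Phi_increment a b : 0 < b -> b <= a -> a < eta ->
  (a - b) / psi a <= Phi a - Phi b.
Proof.
move=> b_gt0 ba a_lt; have [->|b_neq] := eqVneq b a; first by rewrite !subrr mul0r.
have {b_neq} b_lt : b < a by rewrite lt_neqAle b_neq ba.
have intA : (@lebesgue_measure R).-integrable `]0, a[ (EFin \o (fun s => (psi s)^-1)).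
  apply: integrableS psi_inv_integrable => // s /=; rewrite !in_itv /=.
  by move=> /andP[-> sa] /=; lra.
have split_a : `]0, a[%classic = `]0, b[%classic `|` `[b, a[%classic.
  by apply: itv_bndbnd_setU; rewrite bnd_simp.
have disj : [disjoint `]0, b[ & `[b, a[]%classic.
  by apply/disj_setPS => s [] /=; rewrite !in_itv /= => /andP[_ ?] /andP[? _]; lra.
rewrite /Phi split_a Rintegral_setU // -?split_a // addrAC subrr add0r.
have intBA : (@lebesgue_measure R).-integrable `[b, a[
    (EFin \o (fun s => (psi s)^-1)).
  by apply: integrableS intA => //; rewrite split_a; exact: subsetUr.
(* [1 / psi] dominates the constant [1 / psi a] on [[b, a[], by monotonicity of [psi] *)
have -> : (a - b) / psi a =
    fine ((psi a)^-1%:E * @lebesgue_measure R `[b, a[)%E.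
  by rewrite lebesgue_measure_itv /= lte_fin b_lt -EFinD /= mulrC.
rewrite /Rintegral; apply: fine_le.
- by rewrite lebesgue_measure_itv /= lte_fin b_lt.
- exact: integrable_fin_num.
rewrite -integral_cst //; apply: ge0_le_integral => //.
- by move=> s _; rewrite /= lee_fin invr_ge0 ltW // psi_gt0 //; lra.
- exact: measurable_int intBA.
move=> s /=; rewrite in_itv /= => /andP[bs sa].
by rewrite lee_fin lef_pV2 ?posrE ?psi_gt0 ?psi_le //; lra.
Qed.

Lemma desingularizing_potential : exists G : R -> R,
  [/\ forall s, 0 < s -> s < eta -> 0 <= G s,
      forall a b, 0 < b -> b <= a -> a < eta -> (a - b) / psi a <= G a - G b &
      forall e, 0 < e -> exists2 s0, 0 < s0 &
        forall s, 0 < s -> s <= s0 -> s < eta -> G s <= e].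
Proof.
(* [Phi] is nondecreasing, so subtracting its infimum makes it vanish at [0+] *)
pose S := [set Phi s | s in [set s | 0 < s < eta]].
have S_lb : has_lbound S by exists 0 => _ [s /andP[s0 se] <-]; exact: Phi_ge0.
have S_ne : S !=set0.
  by exists (Phi (eta / 2)), (eta / 2) => //=; rewrite divr_gt0 // ltr_pdivrMr // ltr_pMr // ltr1n.
exists (fun s => Phi s - inf S); split.
- move=> s s0 se; rewrite subr_ge0; apply: ge_inf => //.
  by exists s => //; apply/andP.
- by move=> a b b0 ba ae; rewrite opprB addrA subrK; apply: Phi_increment.
move=> e e_gt0.
have [_ [s1 /andP[s1_gt0 s1_lt] <-] Phi_s1] := inf_adherent e_gt0 (conj S_ne S_lb).
exists s1 => // s s_gt0 ss1 s_lt.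
have := Phi_increment s_gt0 ss1 s1_lt.
have : 0 <= (s1 - s) / psi s1 by rewrite divr_ge0 ?subr_ge0 // ltW // psi_gt0 //; lra.
lra.
Qed.

End Desingularizer.

Section FiniteLength.
Variables (R : realType) (n : nat) (x : nat -> 'rV[R]_n) (H : nat -> R) (beta : R).

Lemma enorm_telescope M m :
  (forall j, (M <= j < M + m)%N -> enorm (x j.+1 - x j) <= beta * (H j - H j.+1)) ->
  enorm (x (M + m) - x M) <= beta * (H M - H (M + m)).
Proof.
elim: m => [|m IHm] steps; first by rewrite addn0 !subrr enorm0 mulr0.
have IH : enorm (x (M + m) - x M) <= beta * (H M - H (M + m)).
  by apply: IHm => j /andP[Mj jm]; apply: steps; rewrite Mj addnS leqW.
have step := steps (M + m); rewrite leq_addr addnS ltnSn in step.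
rewrite addnS; apply: le_trans (enorm_distD _ (x (M + m)) _) _.
by move: step IH => /(_ isT); rewrite !mulrBr; lra.
Qed.

Variables (xbar : 'rV[R]_n) (K0 : nat) (rU : R).
Hypothesis x_cluster : cluster (x @ \oo) xbar.
Hypothesis beta_gt0 : 0 < beta.
Hypothesis rU_gt0 : 0 < rU.
Hypothesis H_ge0 : forall k, (K0 <= k)%N -> 0 <= H k.
Hypothesis H_small : forall e, 0 < e -> exists K, forall k, (K <= k)%N -> H k <= e.
Hypothesis length_le : forall k, (K0 <= k)%N -> enorm (x k - xbar) < rU ->
  enorm (x k.+1 - x k) <= beta * (H k - H k.+1).

Lemma iterates_trapped :
  exists2 K, (K0 <= K)%N & forall k, (K <= k)%N -> enorm (x k - xbar) < rU.
Proof.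
have [K1 HK1] := H_small (divr_gt0 (divr_gt0 rU_gt0 (ltr0n R 2)) beta_gt0).
have [K KK0K1 xK] := cluster_enorm x_cluster (maxn K0 K1) (divr_gt0 rU_gt0 (ltr0n R 2)).
have [K0K K1K] : (K0 <= K)%N /\ (K1 <= K)%N by move: KK0K1; rewrite geq_max => /andP.
have betaHK : beta * H K <= rU / 2 by rewrite mulrC -ler_pdivlMr // HK1.
have Hnn j : 0 <= beta * H (K + j).
  by apply: mulr_ge0; [exact: ltW | exact/H_ge0/(leq_trans K0K (leq_addr _ _))].
have inU m : enorm (x (K + m) - x K) <= beta * (H K - H (K + m)) ->
    enorm (x (K + m) - xbar) < rU.
  move=> xKm; apply: le_lt_trans (enorm_distD _ (x K) _) _.
  by move: xKm (Hnn m); rewrite mulrBr; lra.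
have path m : enorm (x (K + m) - x K) <= beta * (H K - H (K + m)).
  elim: m => [|m IHm]; first by rewrite addn0 !subrr enorm0 mulr0.
  have := length_le (leq_trans K0K (leq_addr m K)) (inU m IHm).
  rewrite addnS; move: IHm; rewrite !mulrBr => IHm step.
  by apply: le_trans (enorm_distD _ (x (K + m)) _) _; lra.
by exists K => // k /subnKC <-; apply/inU/path.
Qed.

Lemma finite_length_cvg : x @ \oo --> xbar.
Proof.
have [K K0K inU] := iterates_trapped.
apply: cvg_enorm => e e_gt0.
have [K1 HK1] := H_small (divr_gt0 (divr_gt0 e_gt0 (ltr0n R 2)) beta_gt0).
have [M KK1M xM] := cluster_enorm x_cluster (maxn K K1) (divr_gt0 e_gt0 (ltr0n R 2)).
have [KM K1M] : (K <= M)%N /\ (K1 <= M)%N by move: KK1M; rewrite geq_max => /andP.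
have betaHM : beta * H M <= e / 2 by rewrite mulrC -ler_pdivlMr // HK1.
exists M => k /subnKC <-; apply: le_lt_trans (enorm_distD _ (x M) _) _.
have Hk : 0 <= H (M + (k - M)) by rewrite H_ge0 // (leq_trans (leq_trans K0K KM) (leq_addr _ _)).
have : enorm (x (M + (k - M)) - x M) <= beta * (H M - H (M + (k - M))).
  apply: enorm_telescope => j /andP[Mj _].
  have KMj := leq_trans KM Mj.
  by apply: length_le; [exact: leq_trans K0K KMj | exact: inU].
have := mulr_ge0 (ltW beta_gt0) Hk.
rewrite mulrBr; lra.
Qed.

End FiniteLength.

Section Stepsizes.
Variables (R : realType) (L : R) (t : nat -> R).
Hypothesis L_gt0 : 0 < L.
Hypothesis steps : diminishing_steps t \/ constant_type_steps L t.

Lemma steps_gt0 k : 0 < t k.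
Proof.
case: steps => [[t_gt0 _ _ _] | [delta [delta' [_ delta'_gt0 _ t_in]]]] //.
by case/andP: (t_in k) => /(lt_le_trans delta'_gt0).
Qed.

(* [alpha = 1/2] once [t k <= 1 / L] for diminishing steps, [alpha = delta / 2] for
   constant-type steps *)
Lemma steps_sufficient_decrease : exists2 alpha, 0 < alpha &
  exists K0, forall k, (K0 <= k)%N -> alpha * t k <= t k * (1 - L * t k / 2).
Proof.
case: steps => [[_ _ t_cvg0 _] | [delta [delta' [/andP[delta_gt0 _] _ _ t_in]]]].
- exists (1 / 2) => //.
  have /cvgrPdist_lt /(_ L^-1) := t_cvg0; rewrite invr_gt0 => /(_ L_gt0) [K0 _ tK0].
  exists K0 => k /tK0 /=; rewrite sub0r normrN ger0_norm ?(ltW (steps_gt0 k)) // => tk.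
  have : L * t k < 1 by rewrite -ltr_pdivlMl // mulrC mul1r.
  have := steps_gt0 k; nra.
- exists (delta / 2); first by rewrite divr_gt0.
  exists 0%N => k _; have /andP[_ tk] := t_in k.
  have : L * t k <= 2 - delta by rewrite mulrC -ler_pdivlMr.
  have := steps_gt0 k; nra.
Qed.

Lemma steps_sum_diverges : (fun N => \sum_(k < N) t k) @ \oo --> +oo.
Proof.
case: steps => [[_ _ _ //] | [delta [delta' [_ delta'_gt0 _ t_in]]]].
apply/cvgryPge => A; exists (Num.bound (`|A| / delta')) => // N /= AN.
have A_lt := archi_boundP (divr_ge0 (normr_ge0 A) (ltW delta'_gt0)).
apply: le_trans (ler_norm A) _; rewrite ltr_pdivrMr // in A_lt.
apply: le_trans (ltW A_lt) _; apply: le_trans (_ : N%:R * delta' <= _).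
  by apply: ler_wpM2r; [exact: ltW | rewrite ler_nat].
rewrite mulr_natl -[N in _ *+ N]card_ord -sumr_const.
by apply: ler_sum => k _; case/andP: (t_in k).
Qed.

End Stepsizes.

Lemma sum_tail_unbounded (R : realType) (t : nat -> R) :
  (fun N => \sum_(k < N) t k) @ \oo --> +oo ->
  forall K M, exists m, M <= \sum_(K <= k < K + m) t k.
Proof.
move=> /cvgryPge sum_cvg K M.
have [N _ SN] := sum_cvg (M + \sum_(k < K) t k); exists N.
have := SN (K + N)%N (leq_addl _ _); rewrite /= -!(big_mkord xpredT).
by rewrite [X in _ <= X -> _](@big_cat_nat _ _ _ K) ?leq_addr //= addrC lerD2r.
Qed.

Section IRGRun.
Variables (R : realType) (n : nat)
  (f : 'rV[R]_n -> R) (gradf : 'rV[R]_n -> 'rV[R]_n)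
  (mu theta : R) (rho : nat -> R)
  (x g d : nat -> 'rV[R]_n) (r eps t : nat -> R).
Hypothesis run : IRG_run f gradf mu theta rho x g d r eps t.
Hypothesis rho_eps : forall k, rho k = eps k.

Definition null_iter k := enorm (g k) <= r k + eps k.

Lemma IRG_mu : 0 < mu < 1. Proof. by case: run. Qed.
Lemma IRG_theta : 0 < theta < 1. Proof. by case: run => _ _ _ []. Qed.
Lemma IRG_t_gt0 k : 0 < t k. Proof. by case: run => _ _ _ _ /(_ k) []. Qed.
Lemma IRG_step k : x k.+1 = x k + t k *: d k. Proof. by case: run => _ _ _ _ /(_ k) []. Qed.

Lemma IRG_grad_err k : enorm (g k - gradf (x k)) <= eps k.
Proof. by case: run => _ _ _ _ /(_ k) [+ _ _ _]; rewrite rho_eps minxx. Qed.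

Lemma IRG_null k : null_iter k ->
  [/\ r k.+1 = mu * r k, eps k.+1 = theta * eps k & d k = 0].
Proof. by move=> nk; case: run => _ _ _ _ /(_ k) [_ + _ _]; rewrite -/(null_iter k) nk. Qed.

Lemma IRG_regular k : ~~ null_iter k -> [/\ r k.+1 = r k, eps k.+1 = eps k &
  d k = - ((enorm (g k) - eps k) / enorm (g k)) *: g k].
Proof.
by move=> /negbTE nk; case: run => _ _ _ _ /(_ k) [_ + _ _]; rewrite -/(null_iter k) nk.
Qed.

Lemma IRG_radii_gt0 k : 0 < r k /\ 0 < eps k.
Proof.
elim: k => [|k [r_gt0 eps_gt0]]; first by case: run.
have [/IRG_null [-> -> _]|/IRG_regular [-> -> _]] := boolP (null_iter k) => //.
by case/andP: IRG_mu => mu_gt0 _; case/andP: IRG_theta => th_gt0 _; rewrite !mulr_gt0.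
Qed.

Lemma IRG_r_noninc k j : (k <= j)%N -> r j <= r k.
Proof.
move=> /subnKC <-; elim: (j - k)%N => [|m IHm]; first by rewrite addn0.
rewrite addnS; apply: le_trans IHm; have [r_gt0 _] := IRG_radii_gt0 (k + m).
have [/IRG_null [-> _ _]|/IRG_regular [-> _ _]] := boolP (null_iter (k + m)) => //.
by rewrite ger_pMl //; case/andP: IRG_mu => _ /ltW.
Qed.

Lemma IRG_r_regular K m : (forall j, (K <= j < K + m)%N -> ~~ null_iter j) ->
  r (K + m) = r K.
Proof.
elim: m => [|m IHm] regular; first by rewrite addn0.
have nKm : ~~ null_iter (K + m) by rewrite regular // leq_addr addnS ltnSn.
rewrite addnS; have [-> _ _] := IRG_regular nKm.
by apply: IHm => j /andP[Kj jm]; apply: regular; rewrite Kj addnS leqW.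
Qed.

Lemma IRG_grad_le k : enorm (gradf (x k)) <= enorm (g k) + eps k.
Proof.
rewrite -[gradf _](subKr (g k)) (addrC (g k)); apply: le_trans (enormD _ _) _.
by rewrite enormN addrC lerD2l IRG_grad_err.
Qed.

Lemma IRG_regular_dir k : ~~ null_iter k ->
  enorm (d k) = enorm (g k) - eps k /\ r k < enorm (d k).
Proof.
move=> nk; have [_ _ ->] := IRG_regular nk; have [r_gt0 eps_gt0] := IRG_radii_gt0 k.
move: nk; rewrite /null_iter -ltNge => g_gt.
have g_gt0 : 0 < enorm (g k) by apply: lt_trans g_gt; rewrite addr_gt0.
rewrite enormZ normrN ger0_norm ?divfK ?gt_eqF //; first by split=> //; lra.
by apply: divr_ge0; lra.
Qed.

Lemma IRG_descent_dir k : dotv (gradf (x k)) (d k) <= - enorm (d k) ^+ 2.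
Proof.
have [nk|nk] := boolP (null_iter k).
  by have [_ _ ->] := IRG_null nk; rewrite dotv0r enorm0 expr0n oppr0.
have [-> _] := IRG_regular_dir nk; have [_ _ ->] := IRG_regular nk.
have [r_gt0 eps_gt0] := IRG_radii_gt0 k.
move: nk; rewrite /null_iter -ltNge => g_gt.
have g_gt0 : 0 < enorm (g k) by apply: lt_trans g_gt; rewrite addr_gt0.
set c := (enorm (g k) - eps k) / enorm (g k).
have c_ge0 : 0 <= c by apply: divr_ge0; lra.
(* [<gradf, g> = |g|^2 - <g - gradf, g> >= |g| (|g| - eps)] by Cauchy-Schwarz *)
have err_le : dotv (g k - gradf (x k)) (g k) <= eps k * enorm (g k).
  apply: le_trans (dotv_le _ _) _.
  by rewrite ler_wpM2r ?enorm_ge0 ?IRG_grad_err.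
have -> : gradf (x k) = g k - (g k - gradf (x k)) by rewrite opprB addrC subrK.
rewrite dotvZr dotvBl -enorm_sqr mulNr lerN2.
have -> : (enorm (g k) - eps k) ^+ 2 = c * (enorm (g k) ^+ 2 - eps k * enorm (g k)).
  by rewrite /c; field; rewrite gt_eqF.
by rewrite ler_wpM2l // lerD2l lerN2.
Qed.

Lemma IRG_increment k : x k.+1 - x k = t k *: d k.
Proof. by rewrite IRG_step addrAC subrr add0r. Qed.

Lemma IRG_dist k : enorm (x k.+1 - x k) = t k * enorm (d k).
Proof. by rewrite IRG_increment enormZ ger0_norm // ltW ?IRG_t_gt0. Qed.

Lemma IRG_descent L : L_descent f gradf L -> forall k,
  f (x k.+1) <= f (x k) - t k * (1 - L * t k / 2) * enorm (d k) ^+ 2.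
Proof.
move=> descent k; have := descent (x k) (x k.+1).
rewrite IRG_increment dotvZr enormZ ger0_norm ?(ltW (IRG_t_gt0 k)) //.
have : t k * dotv (gradf (x k)) (d k) <= t k * - enorm (d k) ^+ 2.
  by rewrite ler_pM2l ?IRG_t_gt0 ?IRG_descent_dir.
lra.
Qed.

Hypothesis theta_le_mu : theta <= mu.

(* [eps / r] can only decrease, since null iterations shrink [eps] faster than [r] *)
Lemma IRG_eps_le k : eps k <= eps 0 / r 0 * r k.
Proof.
have [r0_gt0 _] := IRG_radii_gt0 0; rewrite mulrAC ler_pdivlMr //.
elim: k => [|k IHk]; first by rewrite mulrC.
have [/IRG_null [-> -> _]|/IRG_regular [-> -> _]] := boolP (null_iter k) => //.
have [[rk_gt0 _] [_ eps0_gt0]] := (IRG_radii_gt0 k, IRG_radii_gt0 0).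
case/andP: IRG_theta => th_gt0 _.
have := ler_wpM2l (ltW th_gt0) IHk.
have := ler_wpM2r (mulr_ge0 (ltW eps0_gt0) (ltW rk_gt0)) theta_le_mu.
lra.
Qed.

Lemma IRG_grad_le_dir k : ~~ null_iter k ->
  enorm (gradf (x k)) <= (1 + 2 * (eps 0 / r 0)) * enorm (d k).
Proof.
move=> nk; have [dE rd] := IRG_regular_dir nk.
have := IRG_grad_le k; have := IRG_eps_le k; have [r0_gt0 eps0_gt0] := IRG_radii_gt0 0.
have c_ge0 : 0 <= eps 0 / r 0 by rewrite divr_ge0 ?ltW.
have := ler_wpM2l c_ge0 (ltW rd).
lra.
Qed.

Lemma IRG_grad_le_radius k : null_iter k ->
  enorm (gradf (x k)) <= (1 + 2 * (eps 0 / r 0)) * r k.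
Proof. by rewrite /null_iter => nk; have := IRG_grad_le k; have := IRG_eps_le k; lra. Qed.

End IRGRun.

Section IRGConvergence.
Variables (R : realType) (n : nat)
  (f : 'rV[R]_n -> R) (gradf : 'rV[R]_n -> 'rV[R]_n) (L : R)
  (mu theta : R) (rho : nat -> R)
  (x g d : nat -> 'rV[R]_n) (r eps t : nat -> R) (xbar : 'rV[R]_n)
  (alpha : R) (K0 : nat).
Hypothesis f_C1 : C1_with_gradient f gradf.
Hypothesis descent : L_descent f gradf L.
Hypothesis run : IRG_run f gradf mu theta rho x g d r eps t.
Hypothesis theta_le_mu : theta <= mu.
Hypothesis rho_eps : forall k, rho k = eps k.
Hypothesis alpha_gt0 : 0 < alpha.
Hypothesis sufficient_decrease :
  forall k, (K0 <= k)%N -> alpha * t k <= t k * (1 - L * t k / 2).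
Hypothesis tail_unbounded : forall K M, exists m, M <= \sum_(K <= k < K + m) t k.
Hypothesis x_cluster : cluster (x @ \oo) xbar.

Let a k := f (x k) - f xbar.
Let null_iter := null_iter g r eps.

Lemma value_decrease k : (K0 <= k)%N ->
  a k.+1 <= a k - alpha * t k * enorm (d k) ^+ 2.
Proof.
move=> K0k; have := IRG_descent run rho_eps descent k.
have := ler_wpM2r (sqr_ge0 (enorm (d k))) (sufficient_decrease K0k).
rewrite /a; lra.
Qed.

Lemma value_noninc k j : (K0 <= k)%N -> (k <= j)%N -> a j <= a k.
Proof.
move=> K0k /subnKC <-; elim: (j - k)%N => [|m IHm]; first by rewrite addn0.
rewrite addnS; apply: le_trans (value_decrease (leq_trans K0k (leq_addr _ _))) _.
have := mulr_ge0 (mulr_ge0 (ltW alpha_gt0) (ltW (IRG_t_gt0 run (k + m))))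
  (sqr_ge0 (enorm (d (k + m)))).
lra.
Qed.

Lemma f_continuous_at : {for xbar, continuous f}.
Proof. by case: f_C1 => /(_ xbar) /differentiable_continuous. Qed.

(* otherwise [a] stays below [a k < 0] at iterates arbitrarily close to [xbar] *)
Lemma value_ge0 k : (K0 <= k)%N -> 0 <= a k.
Proof.
move=> K0k; rewrite leNgt; apply/negP => ak_lt0.
have ak_pos : 0 < - a k by rewrite oppr_gt0.
have [del del_gt0 f_near] := continuous_enorm f_continuous_at ak_pos.
have [j kj xj] := cluster_enorm x_cluster k del_gt0.
have := f_near _ xj; rewrite -ball_normE /= ltr_norml.
have := value_noninc K0k kj; rewrite /a; lra.
Qed.

Lemma value_small e : 0 < e -> exists2 K, (K0 <= K)%N & forall k, (K <= k)%N -> a k < e.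
Proof.
move=> e_gt0; have [del del_gt0 f_near] := continuous_enorm f_continuous_at e_gt0.
have [K K0K xK] := cluster_enorm x_cluster K0 del_gt0.
exists K => // k Kk; apply: le_lt_trans (value_noninc K0K Kk) _.
by have := f_near _ xK; rewrite -ball_normE /= ltr_norml /a => /andP[? _]; lra.
Qed.

Lemma value_drop_regular K m : (K0 <= K)%N ->
  (forall j, (K <= j < K + m)%N -> ~~ null_iter j) ->
  a (K + m) <= a K - alpha * r K ^+ 2 * \sum_(K <= j < K + m) t j.
Proof.
move=> K0K; elim: m => [|m IHm] regular.
  by rewrite addn0 big_geq // mulr0 subr0.
have regular_m : ~~ null_iter (K + m) by rewrite regular // leq_addr addnS ltnSn.
have regular_lt : forall j, (K <= j < K + m)%N -> ~~ null_iter j.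
  by move=> j /andP[Kj jm]; apply: regular; rewrite Kj addnS leqW.
have {}IHm := IHm regular_lt; have rKm := IRG_r_regular run regular_lt.
have [_ rd] := IRG_regular_dir run regular_m.
have := value_decrease (leq_trans K0K (leq_addr m K)).
rewrite addnS big_nat_recr ?leq_addr //= mulrDr opprD addrA.
have rd2 : r K ^+ 2 <= enorm (d (K + m)) ^+ 2.
  by have := (IRG_radii_gt0 run (K + m)).1; rewrite rKm in rd *; nra.
have := ler_wpM2l (mulr_ge0 (ltW alpha_gt0) (ltW (IRG_t_gt0 run (K + m)))) rd2.
move: IHm; lra.
Qed.

(* without null iterations the radius stays fixed, so [a] would decrease by a
   fixed multiple of the divergent sum of the stepsizes *)
Lemma null_iter_infinitely K : exists2 k, (K <= k)%N & null_iter k.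
Proof.
apply: contrapT => no_null.
have regular j : (maxn K K0 <= j)%N -> ~~ null_iter j.
  by rewrite geq_max => /andP[Kj _]; apply/negP => nj; apply: no_null; exists j.
set K' := maxn K K0; have K0K' : (K0 <= K')%N by rewrite leq_maxr.
have [rK'_gt0 _] := IRG_radii_gt0 run K'.
have c_gt0 : 0 < alpha * r K' ^+ 2 by rewrite mulr_gt0 // exprn_gt0.
have [m sum_ge] := tail_unbounded K' ((a K' + 1) / (alpha * r K' ^+ 2)).
have := value_drop_regular (m := m) K0K' (fun j jK'm => regular j (proj1 (andP jK'm))).
have := value_ge0 (leq_trans K0K' (leq_addr m K')).
rewrite ler_pdivrMr // in sum_ge; nra.
Qed.

Lemma radius_vanishes e : 0 < e -> exists K, forall k, (K <= k)%N -> r k < e.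
Proof.
move=> e_gt0; have [r0_gt0 _] := IRG_radii_gt0 run 0.
have /andP[mu_gt0 mu_lt1] := IRG_mu run.
(* each null iteration multiplies the radius by [mu] *)
have geometric N : exists k, r k <= mu ^+ N * r 0.
  elim: N => [|N [k rk]]; first by exists 0%N; rewrite mul1r.
  have [j kj /(IRG_null run) [rj _ _]] := null_iter_infinitely k.
  exists j.+1; rewrite rj exprS -mulrA ler_pM2l //.
  exact: le_trans (IRG_r_noninc run kj) rk.
have mu_abs : `|mu| < 1 by rewrite ger0_norm ?ltW.
have er_gt0 : 0 < e / r 0 by rewrite divr_gt0.
have [N _ muN] := (cvgrPdist_lt _ _).1 (cvg_expr mu_abs) _ er_gt0.
have [k rk] := geometric N; exists k => j kj.
apply: le_lt_trans (le_trans (IRG_r_noninc run kj) rk) _.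
have := muN N (leqnn N); rewrite /= sub0r normrN ger0_norm ?exprn_ge0 ?ltW //.
by rewrite ltr_pdivlMr.
Qed.

Lemma grad_limit_eq0 : x @ \oo --> xbar -> gradf xbar = 0.
Proof.
move=> x_cvg; apply: enorm_eq0; apply/eqP; rewrite eq_le enorm_ge0 andbT leNgt.
apply/negP => grad_gt0; set z := enorm (gradf xbar) in grad_gt0.
have [_ [_ gradf_cont]] := f_C1.
have z2_gt0 : 0 < z / 2 by rewrite divr_gt0.
have [K1 _ grad_near] := x_cvg _ (gradf_cont xbar _ (nbhs_enorm_ball _ z2_gt0)).
have [r0_gt0 eps0_gt0] := IRG_radii_gt0 run 0.
set C := 1 + 2 * (eps 0 / r 0).
have C_gt0 : 0 < C by rewrite addr_gt0 // mulr_gt0 // divr_gt0.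
have [K2 r_small] := radius_vanishes (divr_gt0 z2_gt0 C_gt0).
have [k Kk nk] := null_iter_infinitely (maxn K1 K2).
move: Kk; rewrite geq_max => /andP[K1k K2k].
have := r_small k K2k; rewrite ltr_pdivlMr // => Cr_lt.
have := IRG_grad_le_radius run rho_eps theta_le_mu nk; rewrite -/C.
have := grad_near k K1k; rewrite /= enorm_distC => near_k.
have := enorm_distD (gradf xbar) (gradf (x k)) 0; rewrite !subr0 -/z.
lra.
Qed.

Lemma iterates_stall k0 : (K0 <= k0)%N -> a k0 = 0 -> forall j, (k0 <= j)%N -> x j = x k0.
Proof.
move=> K0k0 ak0 j /subnKC <-; elim: (j - k0)%N => [|m IHm]; first by rewrite addn0.
have K0m := leq_trans K0k0 (leq_addr m k0).
have a_eq0 i : (k0 <= i)%N -> a i = 0.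
  move=> k0i; apply/eqP; rewrite eq_le value_ge0 ?(leq_trans K0k0 k0i) // andbT.
  by rewrite -ak0 value_noninc.
have := value_decrease K0m; rewrite -addnS !a_eq0 ?leq_addr // sub0r oppr_ge0 => d_le0.
rewrite pmulr_rle0 ?mulr_gt0 ?(IRG_t_gt0 run) // in d_le0.
have d_eq0 : d (k0 + m) = 0.
  by apply/enorm_eq0/eqP; rewrite -sqrf_eq0 eq_le d_le0 sqr_ge0.
by rewrite addnS (IRG_step run) d_eq0 scaler0 addr0.
Qed.

Section KLStep.
Variables (eta : R) (psi G : R -> R) (U : set 'rV[R]_n).
Hypothesis KL_ineq : forall y, U y -> f xbar < f y < f xbar + eta ->
  psi (f y - f xbar) <= enorm (gradf y).
Hypothesis psi_gt0 : forall s, 0 < s < eta -> 0 < psi s.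
Hypothesis G_increment : forall s s', 0 < s' -> s' <= s -> s < eta ->
  (s - s') / psi s <= G s - G s'.

Lemma iterate_length_le k : (K0 <= k)%N -> U (x k) -> 0 < a k.+1 -> a k < eta ->
  enorm (x k.+1 - x k) <= (1 + 2 * (eps 0 / r 0)) / alpha * (G (a k) - G (a k.+1)).
Proof.
move=> K0k Uk ak1_gt0 ak_lt.
have ak1_le := value_noninc K0k (leqnSn k).
have psi_gt : 0 < psi (a k) by apply: psi_gt0; apply/andP; split; lra.
have G_drop := G_increment ak1_gt0 ak1_le ak_lt.
have drop_ge0 : 0 <= (a k - a k.+1) / psi (a k).
  by apply: divr_ge0; [rewrite subr_ge0 | exact: ltW].
have [r0_gt0 eps0_gt0] := IRG_radii_gt0 run 0.
set C := 1 + 2 * (eps 0 / r 0).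
have C_gt0 : 0 < C by rewrite addr_gt0 // mulr_gt0 // divr_gt0.
have beta_gt0 : 0 < C / alpha by rewrite divr_gt0.
rewrite (IRG_dist run); apply: le_trans (ler_wpM2l (ltW beta_gt0) G_drop).
have [nk|nk] := boolP (null_iter k).
  have [_ _ ->] := IRG_null run nk; rewrite enorm0 mulr0.
  exact: mulr_ge0 (ltW beta_gt0) drop_ge0.
have psi_le : psi (a k) <= C * enorm (d k).
  apply: le_trans (IRG_grad_le_dir run rho_eps theta_le_mu nk).
  by apply: KL_ineq => //; rewrite /a in ak1_gt0 ak1_le ak_lt *; apply/andP; split; lra.
have := value_decrease K0k; have := IRG_t_gt0 run k; have := enorm_ge0 (d k).
move=> d_ge0 t_gt0 decrease.
(* [alpha psi t |d| <= alpha C t |d|^2 <= C (a k - a k.+1)] *)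
have : t k * enorm (d k) * (alpha * psi (a k)) <= C * (a k - a k.+1).
  apply: le_trans (_ : t k * enorm (d k) * (alpha * (C * enorm (d k))) <= _).
    apply: ler_wpM2l; first exact: mulr_ge0 (ltW t_gt0) d_ge0.
    by rewrite ler_pM2l.
  have -> : t k * enorm (d k) * (alpha * (C * enorm (d k))) =
    C * (alpha * t k * enorm (d k) ^+ 2) by ring.
  by apply: ler_wpM2l; [exact: ltW | lra].
rewrite (_ : C / alpha * _ = C * (a k - a k.+1) / (alpha * psi (a k))).
  by rewrite ler_pdivlMr ?mulr_gt0.
by field; rewrite !gt_eqF.
Qed.

End KLStep.

Lemma cvg_of_value_eq0 k0 : (K0 <= k0)%N -> a k0 = 0 -> x @ \oo --> xbar.
Proof.
move=> K0k0 ak0; apply: cvg_enorm => e e_gt0; exists k0 => k k0k.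
have [j k0j xj] := cluster_enorm x_cluster k0 e_gt0.
by rewrite (iterates_stall K0k0 ak0 k0k) -(iterates_stall K0k0 ak0 k0j).
Qed.

Lemma cvg_of_value_gt0 : KL_at f gradf xbar ->
  (forall k, (K0 <= k)%N -> 0 < a k) -> x @ \oo --> xbar.
Proof.
case=> eta [U [psi [eta_gt0 U_nbhs [psi_gt0 psi_le] psi_int KL_ineq]]] a_gt0.
have [G [G_ge0 G_increment G_small]] :=
  desingularizing_potential eta_gt0 psi_gt0 psi_le psi_int.
have [rU rU_gt0 in_U] := nbhs_enormP U_nbhs.
have [K1 K0K1 a_lt_eta] := value_small eta_gt0.
have [r0_gt0 eps0_gt0] := IRG_radii_gt0 run 0.
set beta := (1 + 2 * (eps 0 / r 0)) / alpha.
have beta_gt0 : 0 < beta by rewrite divr_gt0 // addr_gt0 // mulr_gt0 // divr_gt0.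
have a_pos k : (K1 <= k)%N -> 0 < a k by move=> /(leq_trans K0K1); exact: a_gt0.
apply: (@finite_length_cvg _ _ x (G \o a) beta xbar K1 rU) => //=.
- by move=> k K1k; apply: G_ge0; [exact: a_pos | exact: a_lt_eta].
- move=> e /G_small [s0 s0_gt0 G_le]; have [K2 _ a_lt_s0] := value_small s0_gt0.
  exists (maxn K1 K2) => k; rewrite geq_max => /andP[K1k K2k].
  by apply: G_le; [exact: a_pos | exact/ltW/a_lt_s0 | exact: a_lt_eta].
move=> k K1k xk; apply: (iterate_length_le KL_ineq psi_gt0 G_increment).
- exact: leq_trans K0K1 K1k.
- exact: in_U.
- exact/a_pos/(leq_trans K1k).
- exact: a_lt_eta.
Qed.

Lemma IRG_cvg : KL_at f gradf xbar -> x @ \oo --> xbar.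
Proof.
move=> KL; have [[k0 [K0k0 ak0]]|a_neq0] :=
  pselect (exists k0, (K0 <= k0)%N /\ a k0 = 0).
  exact: cvg_of_value_eq0 K0k0 ak0.
suff a_pos k : (K0 <= k)%N -> 0 < a k by exact: cvg_of_value_gt0 KL a_pos.
move=> K0k; rewrite lt_neqAle value_ge0 // andbT eq_sym.
by apply/eqP => ak0; apply: a_neq0; exists k.
Qed.

End IRGConvergence.

Unset Implicit Arguments.

Theorem mainTheorem14 (R : realType) (n : nat)
  (f : 'rV[R]_n -> R) (gradf : 'rV[R]_n -> 'rV[R]_n) (L : R)
  (mu theta : R) (rho : nat -> R)
  (x g d : nat -> 'rV[R]_n) (r eps t : nat -> R) (xbar : 'rV[R]_n) :
  C1_with_gradient f gradf ->
  0 < L -> L_descent f gradf L ->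
  IRG_run f gradf mu theta rho x g d r eps t ->
  theta < mu ->
  (forall k, rho k = eps k) ->
  (diminishing_steps t \/ constant_type_steps L t) ->
  cluster (x @ \oo) xbar ->
  KL_at f gradf xbar ->
  gradf xbar = 0 /\ x @ \oo --> xbar.
Proof.
move=> f_C1 L_gt0 descent run theta_lt_mu rho_eps steps x_cluster KL.
have [alpha alpha_gt0 [K0 decrease]] := steps_sufficient_decrease L_gt0 steps.
have tail := sum_tail_unbounded (steps_sum_diverges steps).
have x_cvg := IRG_cvg f_C1 descent run (ltW theta_lt_mu) rho_eps alpha_gt0 decrease
  x_cluster KL.
split=> //; exact: grad_limit_eq0 f_C1 descent run (ltW theta_lt_mu) rho_eps
  alpha_gt0 decrease tail x_cluster x_cvg.
Qed.
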